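(* Let $0<q<1$ and $t>0$, let $n\ge 0$ be an integer, and let $u\in\mathbb{C}\setminus\{0\}$. Then $$\left|S_n(q^{-nt}u;q)\right|\le \frac{|u|^n\,A_q\!\left(-\frac{q^{n(t-2)}}{|u|}\right)}{(q;q)_\infty\, q^{n^2(t-1)}}.$$
   Context: Notation: $(a;q)_0:=1$, $(a;q)_k:=\prod_{j=0}^{k-1}(1-aq^j)$, $(a;q)_\infty:=\prod_{j=0}^{\infty}(1-aq^j)$. Ramanujan's function is the entire function $A_q(z):=\sum_{k=0}^{\infty}\frac{q^{k^2}}{(q;q)_k}(-z)^k$. The Stieltjes–Wigert polynomials are $S_n(x;q):=\sum_{k=0}^{n}\frac{q^{k^2}(-x)^k}{(q;q)_k(q;q)_{n-k}}$. *)

From Stdlib Require Import Reals.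
From Coquelicot Require Import Coquelicot.

Open Scope R_scope.

Fixpoint qpoch (a q : R) (k : nat) : R :=
  match k with
  | O => 1
  | S k' => qpoch a q k' * (1 - a * q ^ k')
  end.

Definition qpoch_inf (q : R) : R := real (Lim_seq (fun k => qpoch q q k)).

Definition ramanujanA (q z : R) : R :=
  Series (fun k => q ^ (k * k) / qpoch q q k * (- z) ^ k).

Definition stieltjesWigert (n : nat) (x : C) (q : R) : C :=
  sum_n (fun k => Cmult (RtoC (q ^ (k * k) / (qpoch q q k * qpoch q q (n - k))))
                        (Cpow (Copp x) k)) n.

(* Expand S_n by the triangle inequality. Writing U = |u| and w = q^{n(t-2)}/U, the
   exponents satisfy q^{k^2} (q^{-nt} U)^k = q^{(n-k)^2} w^{n-k} U^n / q^{n^2 (t-1)},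
   so after bounding 1/(q;q)_k by 1/(q;q)_oo the k-th term is dominated by the
   (n-k)-th term of the positive series A_q(-w), times U^n / ((q;q)_oo q^{n^2(t-1)}).
   The only analytic input is (q;q)_oo > 0, which follows from
   1 - x >= exp (-x/(1-q)) for 0 < x <= q. *)
From Stdlib Require Import Reals Lra Lia.
From Coquelicot Require Import Coquelicot.
Open Scope R_scope.

Lemma sum_n_le_Series (a : nat -> R) (n : nat) :
  (forall k, 0 <= a k) -> ex_series a -> sum_n a n <= Series a.
Proof.
  intros Ha Hex.
  apply (is_lim_seq_incr_compare (sum_n a)); [apply Series_correct, Hex |].
  intro m. rewrite sum_Sn. specialize (Ha (S m)). unfold plus; simpl. lra.
Qed.

Lemma Cmod_sum_n (f : nat -> C) (n : nat) :
  Cmod (sum_n f n) <= sum_n (fun k => Cmod (f k)) n.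
Proof. exact (norm_sum_n_m f 0 n). Qed.

Section QPochhammer.

Variable q : R.
Hypothesis q_gt0 : 0 < q.
Hypothesis q_lt1 : q < 1.

Lemma pow_q_bounds (k : nat) : 0 < q ^ k <= 1.
Proof.
  split; [now apply pow_lt |].
  rewrite <- (pow1 k). apply pow_incr. lra.
Qed.

Lemma pow_q_antitone (a b : nat) : (b <= a)%nat -> q ^ a <= q ^ b.
Proof.
  intro Hba. replace a with (b + (a - b))%nat by lia. rewrite pow_add.
  pose proof (pow_q_bounds b). pose proof (pow_q_bounds (a - b)). nra.
Qed.

Lemma qpoch_pos (k : nat) : 0 < qpoch q q k.
Proof.
  induction k as [|k IH]; simpl; [lra |].
  pose proof (pow_q_bounds k). apply Rmult_lt_0_compat; nra.
Qed.

Lemma qpoch_succ_le (k : nat) : qpoch q q (S k) <= qpoch q q k.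
Proof.
  simpl. pose proof (pow_q_bounds k). pose proof (qpoch_pos k).
  assert (0 <= qpoch q q k * (q * q ^ k)) by (apply Rmult_le_pos; nra).
  nra.
Qed.

Lemma exp_le_one_sub (x : R) : 0 < x <= q -> exp (- (x / (1 - q))) <= 1 - x.
Proof.
  intros Hx. set (y := x / (1 - q)).
  assert (Hy : 0 < y) by (apply Rdiv_lt_0_compat; lra).
  (* exp (-y) <= 1/(1+y), and x (1 + y) <= y is equivalent to x <= q *)
  assert (Hxy : x * (1 + y) <= y).
  { unfold y. apply (Rmult_le_reg_r (1 - q)); [lra |].
    replace (x * (1 + x / (1 - q)) * (1 - q)) with (x * (1 - q) + x * x) by (field; lra).
    replace (x / (1 - q) * (1 - q)) with x by (field; lra). nra. }
  pose proof (exp_ineq1_le y).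
  assert (exp (- y) * exp y = 1)
    by (rewrite <- exp_plus; replace (- y + y) with 0 by ring; apply exp_0).
  pose proof (exp_pos (- y)). nra.
Qed.

Lemma qpoch_ge_exp (k : nat) :
  exp (- (q * (1 - q ^ k) / (1 - q) ^ 2)) <= qpoch q q k.
Proof.
  induction k as [|k IH].
  - simpl. replace (- (q * (1 - 1) / ((1 - q) * ((1 - q) * 1)))) with 0 by (field; lra).
    rewrite exp_0. lra.
  - simpl qpoch. pose proof (pow_q_bounds k).
    replace (- (q * (1 - q ^ S k) / (1 - q) ^ 2))
      with (- (q * (1 - q ^ k) / (1 - q) ^ 2) + - (q * q ^ k / (1 - q))) by (simpl; field; lra).
    rewrite exp_plus.
    apply Rmult_le_compat; try (left; apply exp_pos); [exact IH |].
    apply exp_le_one_sub. nra.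
Qed.

Lemma qpoch_lower_bound (k : nat) : exp (- (q / (1 - q) ^ 2)) <= qpoch q q k.
Proof.
  eapply Rle_trans; [| apply qpoch_ge_exp].
  assert (Hle : - (q / (1 - q) ^ 2) <= - (q * (1 - q ^ k) / (1 - q) ^ 2)).
  { apply Ropp_le_contravar. unfold Rdiv. apply Rmult_le_compat_r.
    - left. apply Rinv_0_lt_compat, pow_lt. lra.
    - pose proof (pow_q_bounds k). nra. }
  destruct (Rle_lt_or_eq_dec _ _ Hle) as [Hlt | ->]; [left; now apply exp_increasing | lra].
Qed.

Lemma is_lim_seq_qpoch : is_lim_seq (qpoch q q) (qpoch_inf q).
Proof.
  destruct (ex_finite_lim_seq_decr (qpoch q q) _ qpoch_succ_le qpoch_lower_bound) as [l Hl].
  unfold qpoch_inf. now rewrite (is_lim_seq_unique (fun k => qpoch q q k) _ Hl).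
Qed.

Lemma qpoch_inf_pos : 0 < qpoch_inf q.
Proof.
  assert (Hle : Rbar_le (exp (- (q / (1 - q) ^ 2))) (qpoch_inf q)).
  { apply (is_lim_seq_le _ _ _ _ qpoch_lower_bound); [apply is_lim_seq_const | apply is_lim_seq_qpoch]. }
  exact (Rlt_le_trans _ _ _ (exp_pos _) Hle).
Qed.

Lemma qpoch_inf_le (k : nat) : qpoch_inf q <= qpoch q q k.
Proof. exact (is_lim_seq_decr_compare _ _ is_lim_seq_qpoch qpoch_succ_le k). Qed.

Definition ramanujan_term (w : R) (j : nat) : R := q ^ (j * j) / qpoch q q j * w ^ j.

Lemma ramanujanA_opp (w : R) : ramanujanA q (- w) = Series (ramanujan_term w).
Proof.
  unfold ramanujanA. apply Series_ext. intro j.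
  unfold ramanujan_term. now rewrite Ropp_involutive.
Qed.

Lemma ramanujan_term_ge0 (w : R) (j : nat) : 0 <= w -> 0 <= ramanujan_term w j.
Proof.
  intro Hw. unfold ramanujan_term.
  apply Rmult_le_pos; [apply Rdiv_le_0_compat | now apply pow_le].
  - left. apply pow_q_bounds.
  - apply qpoch_pos.
Qed.

Lemma ex_series_ramanujan_term (w : R) : 0 <= w -> ex_series (ramanujan_term w).
Proof.
  intro Hw.
  destruct (pow_lt_1_zero q) with (y := / (w + 1)) as [N HN];
    [rewrite Rabs_pos_eq; lra | apply Rinv_0_lt_compat; lra |].
  specialize (HN N (le_n N)). rewrite Rabs_pos_eq in HN by (left; apply pow_q_bounds).
  set (r := q ^ N * w).
  assert (Hr : 0 <= r < 1).
  { unfold r. pose proof (pow_q_bounds N). split; [nra |].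
    apply Rmult_lt_compat_r with (r := w + 1) in HN; [| lra].
    rewrite Rinv_l in HN by lra. nra. }
  (* from index N on, q^{j^2} w^j = (q^j w)^j <= r^j *)
  apply (ex_series_incr_n _ N).
  apply (@ex_series_le R_AbsRing R_CompleteNormedModule)
    with (b := fun j => r ^ N / qpoch_inf q * r ^ j).
  - intro j. change (norm ?x) with (Rabs x).
    rewrite Rabs_pos_eq by now apply ramanujan_term_ge0.
    unfold ramanujan_term, Rdiv.
    replace (q ^ ((N + j) * (N + j)) * / qpoch q q (N + j) * w ^ (N + j))
      with ((q ^ (N + j) * w) ^ (N + j) * / qpoch q q (N + j))
      by (rewrite Rpow_mult_distr, <- pow_mult; ring).
    replace (r ^ N * / qpoch_inf q * r ^ j) with (r ^ (N + j) * / qpoch_inf q)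
      by (rewrite pow_add; ring).
    pose proof (pow_q_bounds (N + j)) as Hq.
    assert (Hqr : q ^ (N + j) * w <= r)
      by (apply Rmult_le_compat_r; [lra | apply pow_q_antitone; lia]).
    apply Rmult_le_compat.
    + apply pow_le. nra.
    + left. apply Rinv_0_lt_compat, qpoch_pos.
    + apply pow_incr. nra.
    + apply Rinv_le_contravar; [apply qpoch_inf_pos | apply qpoch_inf_le].
  - apply (ex_series_scal_l (r ^ N / qpoch_inf q) (fun j => r ^ j)).
    apply ex_series_geom. rewrite Rabs_pos_eq; lra.
Qed.

End QPochhammer.

Lemma Rpower_exponent_reflection (q t U : R) (n k : nat) :
  0 < q -> 0 < U -> (k <= n)%nat ->
  q ^ (k * k) * (Rpower q (- (INR n * t)) * U) ^ k
  = q ^ ((n - k) * (n - k)) * (Rpower q (INR n * (t - 2)) / U) ^ (n - k) * U ^ n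
    / Rpower q (INR n ^ 2 * (t - 1)).
Proof.
  intros Hq HU Hkn.
  assert (HE : 0 < Rpower q (- (INR n * t))) by apply exp_pos.
  assert (HF : 0 < Rpower q (INR n * (t - 2))) by apply exp_pos.
  assert (Hpow : forall x m, 0 < x -> x ^ m = exp (INR m * ln x))
    by (intros; now rewrite <- Rpower_pow).
  rewrite !(Hpow q), (Hpow U), (Hpow (_ * U)), (Hpow (_ / U));
    auto using Rmult_lt_0_compat, Rdiv_lt_0_compat.
  rewrite ln_mult, ln_div by auto. unfold Rpower. rewrite !ln_exp.
  unfold Rdiv. rewrite <- exp_Ropp, <- !exp_plus. f_equal.
  rewrite !mult_INR, !minus_INR by auto. ring.
Qed.

Lemma stieltjesWigert_term_le (q t : R) (n k : nat) (u : C) :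
  0 < q -> q < 1 -> u <> RtoC 0 -> (k <= n)%nat ->
  Cmod (Cmult (RtoC (q ^ (k * k) / (qpoch q q k * qpoch q q (n - k))))
              (Cpow (Copp (Cmult (RtoC (Rpower q (- (INR n * t)))) u)) k))
  <= Cmod u ^ n / (qpoch_inf q * Rpower q (INR n ^ 2 * (t - 1)))
     * ramanujan_term q (Rpower q (INR n * (t - 2)) / Cmod u) (n - k).
Proof.
  intros Hq Hq1 Hu Hkn.
  assert (HU : 0 < Cmod u) by now apply Cmod_gt_0.
  assert (HE : 0 < Rpower q (- (INR n * t))) by apply exp_pos.
  assert (HQ : 0 < Rpower q (INR n ^ 2 * (t - 1))) by apply exp_pos.
  assert (Hw : 0 < Rpower q (INR n * (t - 2)) / Cmod u)
    by (apply Rdiv_lt_0_compat; [apply exp_pos | exact HU]).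
  pose proof (qpoch_pos q Hq Hq1 k) as Hk.
  pose proof (qpoch_pos q Hq Hq1 (n - k)) as Hnk.
  pose proof (qpoch_inf_pos q Hq Hq1) as Hl.
  pose proof (qpoch_inf_le q Hq Hq1 k) as Hlk.
  pose proof (pow_q_bounds q Hq Hq1 (k * k)) as Hqk.
  rewrite Cmod_mult, Cmod_R, Cmod_pow, Cmod_opp, Cmod_mult, Cmod_R.
  rewrite (Rabs_pos_eq (Rpower _ _)), Rabs_pos_eq
    by (lra || (apply Rdiv_le_0_compat; [lra | now apply Rmult_lt_0_compat])).
  set (w := Rpower q (INR n * (t - 2)) / Cmod u) in *.
  set (A := q ^ ((n - k) * (n - k)) * w ^ (n - k) * Cmod u ^ n
            / Rpower q (INR n ^ 2 * (t - 1))).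
  assert (HA : 0 <= A).
  { unfold A. pose proof (pow_q_bounds q Hq Hq1 ((n - k) * (n - k))).
    apply Rdiv_le_0_compat; [| exact HQ].
    repeat apply Rmult_le_pos; try apply pow_le; lra. }
  replace (q ^ (k * k) / (qpoch q q k * qpoch q q (n - k))
           * (Rpower q (- (INR n * t)) * Cmod u) ^ k)
    with (A / (qpoch q q k * qpoch q q (n - k)))
    by (unfold A, w; rewrite <- Rpower_exponent_reflection by auto; field; lra).
  replace (Cmod u ^ n / (qpoch_inf q * Rpower q (INR n ^ 2 * (t - 1)))
           * ramanujan_term q w (n - k))
    with (A / (qpoch_inf q * qpoch q q (n - k)))
    by (unfold A, ramanujan_term; field; lra).
  unfold Rdiv. apply Rmult_le_compat_l; [exact HA |].
  apply Rinv_le_contravar; [now apply Rmult_lt_0_compat |].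
  apply Rmult_le_compat_r; lra.
Qed.

Theorem mainTheorem2 (q t : R) (n : nat) (u : C) :
  0 < q -> q < 1 -> 0 < t -> u <> RtoC 0 ->
  Cmod (stieltjesWigert n (Cmult (RtoC (Rpower q (- (INR n * t)))) u) q)
  <= (Cmod u ^ n * ramanujanA q (- (Rpower q (INR n * (t - 2)) / Cmod u)))
     / (qpoch_inf q * Rpower q (INR n ^ 2 * (t - 1))).
Proof.
  intros Hq Hq1 _ Hu.
  assert (HU : 0 < Cmod u) by now apply Cmod_gt_0.
  assert (HQ : 0 < Rpower q (INR n ^ 2 * (t - 1))) by apply exp_pos.
  pose proof (qpoch_inf_pos q Hq Hq1) as Hl.
  set (w := Rpower q (INR n * (t - 2)) / Cmod u).
  assert (Hw : 0 <= w) by (left; apply Rdiv_lt_0_compat; [apply exp_pos | exact HU]).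
  set (c := Cmod u ^ n / (qpoch_inf q * Rpower q (INR n ^ 2 * (t - 1)))).
  assert (Hc : 0 <= c)
    by (apply Rdiv_le_0_compat; [apply pow_le; lra | now apply Rmult_lt_0_compat]).
  rewrite ramanujanA_opp.
  replace (Cmod u ^ n * Series (ramanujan_term q w) / _)
    with (c * Series (ramanujan_term q w)) by (unfold c; field; lra).
  eapply Rle_trans; [apply Cmod_sum_n |].
  rewrite sum_n_Reals.
  apply Rle_trans with (sum_f_R0 (fun k => c * ramanujan_term q w (n - k)) n).
  { apply sum_Rle. intros k Hk. now apply stieltjesWigert_term_le. }
  rewrite (sum_f_R0_skip (fun j => c * ramanujan_term q w j)), <- sum_n_Reals.
  rewrite (sum_n_mult_l c (ramanujan_term q w)).
  apply Rmult_le_compat_l; [exact Hc |].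
  apply sum_n_le_Series;
    [intro; now apply ramanujan_term_ge0 | now apply ex_series_ramanujan_term].
Qed.
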